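(* The scalar equation $x'=-x-x^2-\tfrac14=-\bigl(x+\tfrac12\bigr)^2$ does not have the conditional Lipschitz shadowing property in $[-\tfrac12,\tfrac12]$ (and hence not in $[-\tfrac12,\infty)$), whereas it has the conditional Lipschitz shadowing property in $[-\rho,\rho]$ for every $\rho\in(0,\tfrac12)$.
   Context: For continuous $g\colon[0,\infty)\times\mathbb R\to\mathbb R$ and $\tau\in(0,\infty]$, a pseudosolution of $x'=g(t,x)$ on $[0,\tau)$ is a $C^1$ map $y\colon[0,\tau)\to\mathbb R$ with $\sigma_y:=\sup_{0\le t<\tau}|y'(t)-g(t,y(t))|<\infty$. The equation has the conditional Lipschitz shadowing property in $H\neq\emptyset$ if there exist $\varepsilon_0,\kappa>0$ such that whenever $0<\varepsilon\le\varepsilon_0$ and $y$ is a pseudosolution on $[0,\tau)$ ($\tau\in(0,\infty]$) with $\sigma_y\le\varepsilon$ and $y(t)\in H$ for all $t\in[0,\tau)$, there is a solution $x$ of the equation defined on $[0,\tau)$ with $\sup_{0\le t<\tau}|x(t)-y(t)|\le\kappa\varepsilon$. *)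

From Stdlib Require Import Reals.
From Coquelicot Require Import Rbar.
Open Scope R_scope.

(* t lies in [0, tau), tau : Rbar (tau = p_infty means [0, oo)). *)
Definition in_dom (tau : Rbar) (t : R) : Prop := 0 <= t /\ Rbar_lt (Finite t) tau.

(* y has derivative dy on [0,tau) (one-sided at the endpoint 0), written out
   as the limit of difference quotients taken within [0,tau). *)
Definition has_deriv_on (tau : Rbar) (y dy : R -> R) : Prop :=
  forall t, in_dom tau t ->
    forall eps, 0 < eps -> exists delta, 0 < delta /\
      forall s, in_dom tau s -> 0 < Rabs (s - t) < delta ->
        Rabs ((y s - y t) / (s - t) - dy t) < eps.

Definition continuous_on_dom (tau : Rbar) (f : R -> R) : Prop :=
  forall t, in_dom tau t ->
    forall eps, 0 < eps -> exists delta, 0 < delta /\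
      forall s, in_dom tau s -> Rabs (s - t) < delta -> Rabs (f s - f t) < eps.

Definition C1_on (tau : Rbar) (y dy : R -> R) : Prop :=
  has_deriv_on tau y dy /\ continuous_on_dom tau dy.

Definition is_solution (g : R -> R -> R) (tau : Rbar) (x : R -> R) : Prop :=
  has_deriv_on tau x (fun t => g t (x t)).

(* A pseudosolution y on [0,tau)
   with sigma_y <= eps is a C^1 map with derivative dy such that
   |dy t - g(t,y t)| <= eps on [0,tau) (this is sup <= eps, hence finite). *)
Definition cond_lip_shadowing (g : R -> R -> R) (H : R -> Prop) : Prop :=
  exists eps0 kappa, 0 < eps0 /\ 0 < kappa /\
    forall eps, 0 < eps <= eps0 ->
    forall (tau : Rbar), Rbar_lt (Finite 0) tau ->
    forall (y dy : R -> R),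
      C1_on tau y dy ->
      (forall t, in_dom tau t -> Rabs (dy t - g t (y t)) <= eps) ->
      (forall t, in_dom tau t -> H (y t)) ->
      exists x : R -> R, is_solution g tau x /\
        forall t, in_dom tau t -> Rabs (x t - y t) <= kappa * eps.

Definition g6 (t x : R) : R := - x - x ^ 2 - 1 / 4.

(* For small d > 0 the constant y = d - 1/2 is a pseudosolution
   with defect d^2 lying in [-1/2, 1/2].  A solution within kappa d^2 <= d/2
   of it stays above -1/2 + d/2, so its slope is at most -(d/2)^2 forever and
   it drifts off to -oo: no solution shadows y.  Shrinking the set H only makes
   shadowing easier, which gives the statement for [-1/2, +oo).

   On [-rho, rho] with a = 1/2 - rho, take the explicit
   solution x(t) = u0 / (1 + u0 t) - 1/2 with x(0) = y(0).  Since
   g6 x - g6 y = -(x - y) ((x + 1/2) + (y + 1/2)) and the second factor is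
   >= a, the difference x - y can never climb above eps / a (a barrier
   argument), and neither can y - x; hence kappa = 1/a works. *)

From Stdlib Require Import Reals Lra Psatz Classical.
From Coquelicot Require Import Coquelicot.
Open Scope R_scope.

Lemma in_dom_between tau p q c :
  0 <= p -> in_dom tau q -> p <= c <= q -> in_dom tau c.
Proof.
  intros Hp [_ Hq] Hc. split; [lra|].
  apply Rbar_le_lt_trans with (Finite q); [simpl; lra | exact Hq].
Qed.

Lemma in_dom_interior tau t : in_dom tau t -> 0 < t ->
  exists d, 0 < d /\ forall s, Rabs (s - t) < d -> in_dom tau s.
Proof.
  intros [_ Ht] Hpos. destruct tau as [r| |]; simpl in Ht; [| |contradiction].
  - exists (Rmin t (r - t)). split; [apply Rmin_case; lra|].
    intros s Hs%Rabs_def2. pose proof (Rmin_l t (r - t)). pose proof (Rmin_r t (r - t)).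
    split; simpl; lra.
  - exists t. split; [lra|]. intros s Hs%Rabs_def2. split; simpl; [lra | exact I].
Qed.

Lemma deriv_interior tau f D t : has_deriv_on tau f D -> in_dom tau t -> 0 < t ->
  derivable_pt_lim f t (D t).
Proof.
  intros Hd Ht Hpos eps Heps.
  destruct (in_dom_interior tau t Ht Hpos) as [d [Hd0 Hnear]].
  destruct (Hd t Ht eps Heps) as [del [Hdel Hq]].
  assert (Hm : 0 < Rmin del d) by (apply Rmin_case; lra).
  exists (mkposreal _ Hm). intros h Hh0 Hh. simpl in Hh.
  pose proof (Rmin_l del d). pose proof (Rmin_r del d).
  specialize (Hq (t + h)). replace (t + h - t) with h in Hq by ring.
  apply Hq; [apply Hnear; replace (t + h - t) with h by ring; lra|].
  split; [apply Rabs_pos_lt; exact Hh0 | lra].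
Qed.

Lemma deriv_of_lim tau f D :
  (forall t, in_dom tau t -> derivable_pt_lim f t (D t)) -> has_deriv_on tau f D.
Proof.
  intros H t Ht eps Heps. destruct (H t Ht eps Heps) as [del Hdel].
  exists del. split; [apply cond_pos|]. intros s _ [Hpos Hlt].
  assert (Hne : s - t <> 0) by (intro E; rewrite E, Rabs_R0 in Hpos; lra).
  specialize (Hdel (s - t) Hne Hlt). replace (t + (s - t)) with s in Hdel by ring.
  exact Hdel.
Qed.

Lemma deriv_continuous tau f D : has_deriv_on tau f D -> continuous_on_dom tau f.
Proof.
  intros Hd t Ht eps Heps.
  destruct (Hd t Ht 1 Rlt_0_1) as [del [Hdel Hq]].
  set (M := Rabs (D t) + 1).
  assert (HM : 0 < M) by (unfold M; pose proof (Rabs_pos (D t)); lra).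
  exists (Rmin del (eps / M)). split; [apply Rmin_case; [lra | apply Rdiv_lt_0_compat; lra]|].
  intros s Hs Hst. pose proof (Rmin_l del (eps / M)). pose proof (Rmin_r del (eps / M)).
  destruct (Req_dec s t) as [->|Hne]; [rewrite Rminus_diag, Rabs_R0; lra|].
  assert (Hpos : 0 < Rabs (s - t)) by (apply Rabs_pos_lt; lra).
  assert (Hclose : Rabs (s - t) < del) by lra.
  specialize (Hq s Hs (conj Hpos Hclose)).
  assert (Hquot : Rabs ((f s - f t) / (s - t)) <= M).
  { unfold M. replace ((f s - f t) / (s - t)) with ((f s - f t) / (s - t) - D t + D t) by ring.
    pose proof (Rabs_triang ((f s - f t) / (s - t) - D t) (D t)). lra. }
  replace (f s - f t) with ((f s - f t) / (s - t) * (s - t)) by (field; lra).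
  rewrite Rabs_mult.
  apply Rle_lt_trans with (M * Rabs (s - t)); [apply Rmult_le_compat_r; [apply Rabs_pos | exact Hquot]|].
  apply Rlt_le_trans with (M * (eps / M)); [apply Rmult_lt_compat_l; lra | right; field; lra].
Qed.

Lemma deriv_minus tau f g Df Dg : has_deriv_on tau f Df -> has_deriv_on tau g Dg ->
  has_deriv_on tau (fun t => f t - g t) (fun t => Df t - Dg t).
Proof.
  intros Hf Hg t Ht eps Heps.
  destruct (Hf t Ht (eps / 2)) as [d1 [Hd1 H1]]; [lra|].
  destruct (Hg t Ht (eps / 2)) as [d2 [Hd2 H2]]; [lra|].
  exists (Rmin d1 d2). split; [apply Rmin_case; lra|].
  intros s Hs [Hpos Hlt]. pose proof (Rmin_l d1 d2). pose proof (Rmin_r d1 d2).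
  assert (Hl1 : Rabs (s - t) < d1) by lra. assert (Hl2 : Rabs (s - t) < d2) by lra.
  specialize (H1 s Hs (conj Hpos Hl1)). specialize (H2 s Hs (conj Hpos Hl2)).
  assert (Hne : s - t <> 0) by (intro E; rewrite E, Rabs_R0 in Hpos; lra).
  replace ((f s - g s - (f t - g t)) / (s - t) - (Df t - Dg t)) with
    (((f s - f t) / (s - t) - Df t) - ((g s - g t) / (s - t) - Dg t)) by (field; exact Hne).
  pose proof (Rabs_triang ((f s - f t) / (s - t) - Df t) (- ((g s - g t) / (s - t) - Dg t))).
  rewrite Rabs_Ropp in *. unfold Rminus at 1. lra.
Qed.

Lemma const_C1 tau a : C1_on tau (fun _ => a) (fun _ => 0).
Proof.
  split; intros t _ eps Heps; exists 1; split; try lra; intros s _ _.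
  - replace ((a - a) / (s - t) - 0) with 0 by (unfold Rdiv; ring). rewrite Rabs_R0; lra.
  - rewrite Rminus_diag, Rabs_R0; lra.
Qed.

(* A slope bound f q <= f s - m (q - s) valid for all s in (p, q) passes to
   the endpoint p by continuity; this handles the one-sided endpoint 0. *)
Lemma slope_bound_endpoint tau f m p q :
  continuous_on_dom tau f -> 0 <= p < q -> in_dom tau q ->
  (forall s, p < s < q -> f q <= f s - m * (q - s)) -> f q <= f p - m * (q - p).
Proof.
  intros Hc Hpq Hq Hs.
  destruct (Rle_dec (f q) (f p - m * (q - p))) as [|Hgap]; [assumption|exfalso].
  set (g := f q - (f p - m * (q - p))).
  assert (Hp : in_dom tau p) by (apply (in_dom_between tau p q); auto; lra).
  destruct (Hc p Hp (g / 2)) as [del [Hdel Hnear]]; [unfold g; lra|].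
  set (k := g / (2 * (Rabs m + 1))).
  assert (Hk : k * (2 * (Rabs m + 1)) = g) by (unfold k; field; pose proof (Rabs_pos m); lra).
  assert (Hk0 : 0 < k) by (unfold k; apply Rdiv_lt_0_compat; [unfold g | pose proof (Rabs_pos m)]; lra).
  (* a step h small for continuity, inside (p, q), and with |m| h <= g/2 *)
  set (h := Rmin (Rmin del (q - p)) k / 2).
  pose proof (Rmin_l (Rmin del (q - p)) k). pose proof (Rmin_r (Rmin del (q - p)) k).
  pose proof (Rmin_l del (q - p)). pose proof (Rmin_r del (q - p)).
  assert (Hh0 : 0 < Rmin (Rmin del (q - p)) k) by (repeat apply Rmin_case; lra).
  assert (Hh : 0 < h < q - p) by (unfold h; lra).
  assert (Hmh : m * h <= g / 2) by (pose proof (Rle_abs m); pose proof (Rabs_pos m); unfold h in *; nra).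
  specialize (Hs (p + h) ltac:(lra)).
  specialize (Hnear (p + h) ltac:(apply (in_dom_between tau p q); auto; lra)).
  replace (p + h - p) with h in Hnear by ring.
  rewrite Rabs_pos_eq in Hnear by lra.
  specialize (Hnear ltac:(unfold h; lra)). apply Rabs_def2 in Hnear.
  unfold g in *. lra.
Qed.

Lemma slope_bound tau f D m p q : has_deriv_on tau f D -> 0 <= p < q -> in_dom tau q ->
  (forall c, p < c < q -> D c <= - m) -> f q <= f p - m * (q - p).
Proof.
  intros Hd Hpq Hq HD.
  apply (slope_bound_endpoint tau); [eapply deriv_continuous; eauto | lra | exact Hq |].
  intros s Hs.
  destruct (MVT_cor2 f D s q) as [c [Hmvt Hc]]; [lra| |].
  - intros c Hc. apply (deriv_interior tau); [exact Hd | | lra].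
    apply (in_dom_between tau p q); auto; lra.
  - assert (D c <= - m) by (apply HD; lra). nra.
Qed.

Lemma last_time_in_sublevel tau f K t1 :
  continuous_on_dom tau f -> in_dom tau t1 -> f 0 <= K ->
  exists t0, 0 <= t0 <= t1 /\ f t0 <= K /\ forall s, t0 < s <= t1 -> K < f s.
Proof.
  intros Hc Ht1 Hf0.
  assert (Ht1p : 0 <= t1) by (destruct Ht1; lra).
  set (E := fun s => 0 <= s <= t1 /\ f s <= K).
  destruct (completeness E) as [t0 [Hub Hlub]].
  { exists t1. intros s [Hs _]. lra. }
  { exists 0. split; lra. }
  assert (Ht0 : 0 <= t0 <= t1) by (split; [apply Hub; split; lra | apply Hlub; intros s [Hs _]; lra]).
  exists t0. split; [exact Ht0|]. split.
  - (* the supremum lies in E since E is closed *)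
    destruct (Rle_dec (f t0) K) as [|Hn]; [assumption|exfalso].
    destruct (Hc t0 ltac:(apply (in_dom_between tau 0 t1); auto; lra) (f t0 - K))
      as [del [Hdel Hnear]]; [lra|].
    assert (Hex : exists s, E s /\ t0 - del < s).
    { apply NNPP. intro Hne. assert (Hup : t0 <= t0 - del); [|lra].
      apply Hlub. intros s Hs. apply Rnot_lt_le. intro Hlt. apply Hne. exists s. auto. }
    destruct Hex as [s [[Hs1 Hs2] Hs3]].
    assert (s <= t0) by (apply Hub; split; auto).
    specialize (Hnear s ltac:(apply (in_dom_between tau 0 t1); auto; lra)).
    rewrite Rabs_left1 in Hnear by lra. specialize (Hnear ltac:(lra)).
    apply Rabs_def2 in Hnear. lra.
  - intros s Hs. apply Rnot_le_lt. intro Hfs.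
    assert (s <= t0) by (apply Hub; split; [lra | exact Hfs]). lra.
Qed.

Lemma barrier tau f D K : has_deriv_on tau f D -> f 0 <= K ->
  (forall c, in_dom tau c -> K < f c -> D c <= 0) ->
  forall t, in_dom tau t -> f t <= K.
Proof.
  intros Hd Hf0 HD t1 Ht1.
  apply Rnot_lt_le. intro Habove.
  destruct (last_time_in_sublevel tau f K t1 (deriv_continuous tau f D Hd) Ht1 Hf0)
    as [t0 [Ht0 [Hft0 Hafter]]].
  assert (Hlt : t0 < t1) by (destruct (Req_dec t0 t1) as [->|]; lra).
  assert (Hdrop : f t1 <= f t0 - 0 * (t1 - t0)); [|lra].
  apply (slope_bound tau f D 0 t0 t1 Hd ltac:(lra) Ht1).
  intros c Hc. rewrite Ropp_0. apply HD; [apply (in_dom_between tau 0 t1); auto; lra|].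
  apply Hafter. lra.
Qed.

Lemma shadowing_antitone g (H1 H2 : R -> Prop) : (forall z, H1 z -> H2 z) ->
  cond_lip_shadowing g H2 -> cond_lip_shadowing g H1.
Proof.
  intros Hsub [e0 [k [He [Hk Hsh]]]]. exists e0, k. do 2 (split; [assumption|]).
  intros eps Heps tau Htau y dy Hc Herr HH. apply (Hsh eps Heps tau Htau y dy Hc Herr).
  intros t Ht. apply Hsub, HH, Ht.
Qed.

Lemma g6_square t z : g6 t z = - (z + 1/2) ^ 2.
Proof. unfold g6. field. Qed.

Lemma g6_diff t x z : g6 t x - g6 t z = - (x - z) * ((x + 1/2) + (z + 1/2)).
Proof. unfold g6. field. Qed.

Lemma g6_drift x c : is_solution g6 p_infty x ->
  (forall t, 0 <= t -> c <= x t + 1/2) -> 0 < c ->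
  forall T, 0 < T -> x T <= x 0 - c ^ 2 * T.
Proof.
  intros Hsol Habove Hc T HT.
  replace (c ^ 2 * T) with (c ^ 2 * (T - 0)) by ring.
  apply (slope_bound p_infty x _ (c ^ 2) 0 T Hsol ltac:(lra) ltac:(split; simpl; [lra | exact I])).
  intros s Hs. rewrite g6_square. pose proof (Habove s ltac:(lra)). nra.
Qed.

Definition g6_sol (u0 t : R) : R := u0 / (1 + u0 * t) - 1/2.

Lemma g6_sol_solution tau u0 : 0 < u0 -> is_solution g6 tau (g6_sol u0).
Proof.
  intros Hu. apply deriv_of_lim. intros t [Ht _]. apply is_derive_Reals.
  assert (0 < 1 + u0 * t) by nra.
  unfold g6_sol. auto_derive; [lra|]. rewrite g6_square. field. lra.
Qed.

Lemma g6_sol_above u0 t : 0 < u0 -> 0 <= t -> 0 < g6_sol u0 t + 1/2.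
Proof.
  intros Hu Ht. unfold g6_sol. replace (u0 / (1 + u0 * t) - 1/2 + 1/2) with (u0 / (1 + u0 * t)) by ring.
  apply Rdiv_lt_0_compat; nra.
Qed.

Lemma g6_sol_0 u0 : g6_sol u0 0 = u0 - 1/2.
Proof. unfold g6_sol. field. Qed.

(* Deviation estimate: a solution x and an eps-pseudosolution y with the same
   initial value stay within eps / a as long as (x + 1/2) + (y + 1/2) >= a,
   since then the equation contracts x - y at rate a. *)
Lemma g6_deviation tau x y dy eps a : 0 < a -> 0 <= eps ->
  is_solution g6 tau x -> has_deriv_on tau y dy -> x 0 = y 0 ->
  (forall t, in_dom tau t -> Rabs (dy t - g6 t (y t)) <= eps) ->
  (forall t, in_dom tau t -> a <= (x t + 1/2) + (y t + 1/2)) ->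
  forall t, in_dom tau t -> Rabs (x t - y t) <= eps / a.
Proof.
  intros Ha Heps Hx Hy H0 Herr Hsum t Ht.
  assert (HK : a * (eps / a) = eps) by (field; lra).
  assert (HK0 : 0 <= eps / a) by (apply Rdiv_le_0_compat; lra).
  apply Rabs_le_between.
  assert (Hup : forall c, in_dom tau c -> eps / a < x c - y c -> g6 c (x c) - dy c <= 0).
  { intros c Hc Hlt. pose proof (g6_diff c (x c) (y c)).
    pose proof (proj1 (Rabs_le_between _ _) (Herr c Hc)). pose proof (Hsum c Hc). nra. }
  assert (Hlo : forall c, in_dom tau c -> eps / a < y c - x c -> dy c - g6 c (x c) <= 0).
  { intros c Hc Hlt. pose proof (g6_diff c (x c) (y c)).
    pose proof (proj1 (Rabs_le_between _ _) (Herr c Hc)). pose proof (Hsum c Hc). nra. }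
  split.
  - assert (y t - x t <= eps / a); [|lra].
    apply (barrier tau _ _ (eps / a) (deriv_minus tau _ _ _ _ Hy Hx)); [lra | exact Hlo | exact Ht].
  - apply (barrier tau _ _ (eps / a) (deriv_minus tau _ _ _ _ Hx Hy)); [lra | exact Hup | exact Ht].
Qed.

Lemma no_shadowing_half : ~ cond_lip_shadowing g6 (fun x => - (1 / 2) <= x <= 1 / 2).
Proof.
  intros [eps0 [kappa [He0 [Hk Hsh]]]].
  set (d := Rmin (1/2) (Rmin eps0 (1 / (2 * kappa)))).
  assert (Hk2 : 0 < 1 / (2 * kappa)) by (apply Rdiv_lt_0_compat; lra).
  assert (Hd : 0 < d) by (unfold d; repeat apply Rmin_case; lra).
  assert (Hd_bounds : d <= 1/2 /\ d <= eps0 /\ d <= 1 / (2 * kappa)).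
  { unfold d. pose proof (Rmin_l (1/2) (Rmin eps0 (1 / (2 * kappa)))).
    pose proof (Rmin_r (1/2) (Rmin eps0 (1 / (2 * kappa)))).
    pose proof (Rmin_l eps0 (1 / (2 * kappa))). pose proof (Rmin_r eps0 (1 / (2 * kappa))).
    lra. }
  assert (Hkd : kappa * d <= 1/2).
  { replace (1/2) with (kappa * (1 / (2 * kappa))) by (field; lra).
    apply Rmult_le_compat_l; lra. }
  destruct (Hsh (d ^ 2) ltac:(split; nra) p_infty I (fun _ => d - 1/2) (fun _ => 0)
              (const_C1 _ _)) as [x [Hsol Hclose]].
  - intros t _. rewrite g6_square. replace (0 - - (d - 1/2 + 1/2) ^ 2) with (d ^ 2) by ring.
    rewrite Rabs_pos_eq; nra.
  - intros t _. lra.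
  - (* the shadowing solution stays within d/2 of d - 1/2, hence above -1/2 + d/2 *)
    assert (Hnear : forall t, 0 <= t -> - (d / 2) <= x t - (d - 1/2) <= d / 2).
    { intros t Ht. apply Rabs_le_between.
      apply Rle_trans with (kappa * d ^ 2); [apply Hclose; split; simpl; [lra | exact I] | nra]. }
    set (T := 4 / d + 1).
    assert (HT : d / 2 * (d / 2) * T = d + d ^ 2 / 4) by (unfold T; field; lra).
    assert (HT0 : 0 < T) by (unfold T; pose proof (Rdiv_lt_0_compat 4 d ltac:(lra) Hd); lra).
    pose proof (g6_drift x (d / 2) Hsol ltac:(intros t Ht; pose proof (Hnear t Ht); lra)
                  ltac:(lra) T HT0).
    pose proof (Hnear 0 ltac:(lra)). pose proof (Hnear T ltac:(lra)).
    nra.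
Qed.

Lemma shadowing_rho rho : 0 < rho < 1/2 -> cond_lip_shadowing g6 (fun x => - rho <= x <= rho).
Proof.
  intros Hr. set (a := 1/2 - rho). assert (Ha : 0 < a) by (unfold a; lra).
  exists 1, (1 / a). split; [lra|]. split; [apply Rdiv_lt_0_compat; lra|].
  intros eps Heps tau Htau y dy [Hy _] Herr HH.
  assert (H0 : in_dom tau 0) by (split; [lra | exact Htau]).
  set (u0 := y 0 + 1/2).
  assert (Hu0 : a <= u0) by (unfold u0, a; destruct (HH 0 H0); lra).
  exists (g6_sol u0). split; [apply g6_sol_solution; lra|].
  intros t Ht. replace (1 / a * eps) with (eps / a) by (field; lra).
  apply (g6_deviation tau _ y dy); try assumption; try lra.
  - apply g6_sol_solution. lra.
  - rewrite g6_sol_0. unfold u0. ring.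
  - intros s Hs. pose proof (g6_sol_above u0 s ltac:(lra) ltac:(destruct Hs; lra)).
    destruct (HH s Hs). unfold a. lra.
Qed.

Theorem mainTheorem6 :
  ~ cond_lip_shadowing g6 (fun x => - (1 / 2) <= x <= 1 / 2) /\
  ~ cond_lip_shadowing g6 (fun x => - (1 / 2) <= x) /\
  (forall rho : R, 0 < rho < 1 / 2 ->
     cond_lip_shadowing g6 (fun x => - rho <= x <= rho)).
Proof.
  split; [exact no_shadowing_half|]. split; [|exact shadowing_rho].
  intro Hhalfline. apply no_shadowing_half. revert Hhalfline.
  apply shadowing_antitone. intros z Hz. lra.
Qed.
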